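(* Let $k\ge1$ channels and $n>k$ players, each with one packet, under ternary feedback. Under protocol SOP — in every slot $t\ge1$, when $m$ players are pending ($1\le m\le n$), every pending player transmits on each channel with probability $1/\max\{m,k\}$ and stays idle with the remaining probability, independently — the expected finishing time (the first slot by which all players have transmitted successfully) is $O((n-k)/k)$.
   Context: In each slot, a player transmitting alone on a channel succeeds and leaves; two or more players transmitting on the same channel collide and remain pending. Ternary feedback: every pending player knows the current number $m$ of pending players in every slot. *)

From HB Require Import structures.
From mathcomp Require Import all_boot all_order all_algebra.
From mathcomp Require Import reals.
Set Implicit Arguments. Unset Strict Implicit. Unset Printing Implicit Defensive.
Import Order.TTheory GRing.Theory Num.Theory.
Local Open Scope ring_scope.

Section SOP.
Variable R : realType.

(* Action of one pending player in a slot when m players are pending: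
   [Some j] = transmit on channel j (prob 1/max(m,k) each),
   [None]   = stay idle (remaining probability). *)
Definition act_prob (k m : nat) (a : option 'I_k) : R :=
  match a with
  | Some _ => 1 / (maxn m k)%:R
  | None => 1 - k%:R / (maxn m k)%:R
  end.

Definition config_prob (k m : nat) (f : {ffun 'I_m -> option 'I_k}) : R :=
  \prod_(i < m) @act_prob k m (f i).

Definition successes (k m : nat) (f : {ffun 'I_m -> option 'I_k}) : nat :=
  #|[set j : 'I_k | #|[set i : 'I_m | f i == Some j]| == 1%N]|.

Definition trans (k m m' : nat) : R :=
  \sum_(f : {ffun 'I_m -> option 'I_k} | (m - @successes k m f)%N == m') @config_prob k m f.

(* alive k n t m = probability that after t slots the protocol has not yet
   finished (some player still pending at every slot so far) and exactly m
   players are pending; start: n pending players. *)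
Fixpoint alive (k n t m' : nat) {struct t} : R :=
  match t with
  | 0 => (m' == n)%:R
  | t.+1 => if m' == 0%N then 0
            else \sum_(1 <= m < n.+1) alive k n t m * trans k m m'
  end.

(* P(T > t), T = finishing time (first slot by which all players succeeded). *)
Definition tail_prob (k n t : nat) : R := \sum_(1 <= m < n.+1) alive k n t m.

(* Partial sums of E[T] = sum_{t >= 0} P(T > t). *)
Definition expected_time_partial (k n N : nat) : R :=
  \sum_(t < N) tail_prob k n t.

End SOP.

From HB Require Import structures.
From mathcomp Require Import all_boot all_order all_algebra.
From mathcomp Require Import reals.
From mathcomp Require Import zify.
From mathcomp.algebra_tactics Require Import ring lra.
Import Order.TTheory GRing.Theory Num.Theory.
Set Implicit Arguments. Unset Strict Implicit. Unset Printing Implicit Defensive.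
Local Open Scope ring_scope.

(* With m players pending, each of the k channels carries exactly one
   transmitter with probability m p (1 - p)^(m-1), where p = 1/max(m,k); as
   (1 - 1/M)^(M-1) >= 1/4, a slot has at least min(m,k)/4 successes in
   expectation.  Each success lowers the potential V(m) = 4 (m/k + min(m,k)) by
   at least 4/min(m,k), so while some player is pending the potential of the
   number of pending players drops by at least 1 in expectation per slot.
   Hence E[V(M_t); T > t] decreases by at least P(T > t) at every step, and
   E[T] = sum_t P(T > t) <= V(n) = 4 (n/k + k), which is at most 8 (n - k)/k
   once n >= k^2 + 2k. *)

Lemma big_option (V : nmodType) (T : finType) (F : option T -> V) :
  \sum_(a : option T) F a = F None + \sum_(j : T) F (Some j).
Proof.
rewrite (bigD1 None) //= (reindex_omap Some id) //=; last by case.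
by congr (_ + _); apply: eq_bigl => j; rewrite eqxx.
Qed.

Section RealFieldFacts.
Variable R : realFieldType.

Lemma sum_le_of_potential (a Phi : nat -> R) (N : nat) :
  (forall t, 0 <= Phi t) -> (forall t, Phi t.+1 <= Phi t - a t) ->
  \sum_(t < N) a t <= Phi 0%N.
Proof.
move=> Phi_ge0 Phi_step; suff : \sum_(t < N) a t <= Phi 0%N - Phi N.
  by have := Phi_ge0 N; lra.
elim: N => [|N IH]; first by rewrite big_ord0 subrr.
by rewrite big_ord_recr /=; have := Phi_step N; lra.
Qed.

Lemma bernoulli_ineq (x : R) (n : nat) : x <= 1 ->
  1 - n%:R * x <= (1 - x) ^+ n.
Proof.
move=> x_le1; elim: n => [|n IHn]; first by rewrite expr0 mul0r subr0.
rewrite exprSr -natr1.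
have : 0 <= ((1 - x) ^+ n - (1 - n%:R * x)) * (1 - x) by rewrite mulr_ge0 ?subr_ge0.
have : 0 <= n%:R * x * x by rewrite -mulrA mulr_ge0 // -expr2 sqr_ge0.
nra.
Qed.

Lemma exp_one_sub_inv_ge_quarter (M : nat) : (0 < M)%N ->
  1 / 4 <= (1 - 1 / M%:R) ^+ M.-1 :> R.
Proof.
move=> M_gt0; have M_pos : 0 < M%:R :> R by rewrite ltr0n.
have inv_le1 : 1 / M%:R <= 1 :> R by rewrite ler_pdivrMr // mul1r ler1n.
have half_le c : (2 * c <= M)%N -> 1 / 2 <= (1 - 1 / M%:R) ^+ c :> R.
  move=> cM; apply: le_trans _ (bernoulli_ineq c inv_le1).
  have : c%:R / M%:R <= 1 / 2 :> R.
    rewrite ler_pdivrMr //; have : (c * 2)%:R <= M%:R :> R by rewrite ler_nat mulnC.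
    by rewrite natrM; lra.
  by rewrite mulrA mulr1; lra.
have -> : M.-1 = ((M.-1 %/ 2) + (M.-1 - M.-1 %/ 2))%N by lia.
rewrite exprD; have -> : 1 / 4 = 1 / 2 * (1 / 2) :> R by field.
by apply: ler_pM; rewrite ?divr_ge0 ?half_le //; lia.
Qed.

End RealFieldFacts.

Section IndicatorSums.
Variable R : comPzSemiRingType.

Lemma natr_card_set (T : finType) (P : pred T) :
  #|[set x | P x]|%:R = \sum_x (P x)%:R :> R.
Proof.
rewrite -sum1_card natr_sum big_mkcond; apply: eq_bigr => x _.
by rewrite inE; case: (P x).
Qed.

Lemma natr_card_eq1 (T : finType) (A : {set T}) :
  (#|A| == 1)%N%:R = \sum_x (A == [set x])%:R :> R.
Proof.
case: cards1P => [[x ->]|A_not1]; last first.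
  by rewrite big1 // => x _; case: eqP => // Ax; case: A_not1; exists x.
rewrite (bigD1 x) //= eqxx big1 ?addr0 // => y yx.
by case: eqP => // /setP /(_ x); rewrite !inE eqxx eq_sym (negbTE yx).
Qed.

Lemma prodr_natb (I : finType) (b : pred I) :
  \prod_i (b i)%:R = [forall i, b i]%:R :> R.
Proof.
case: (boolP [forall i, b i]) => [/forallP b_all|].
  by rewrite big1 // => i _; rewrite b_all.
by rewrite negb_forall => /existsP [i /negbTE b_i]; rewrite (bigD1 i) //= b_i mul0r.
Qed.

End IndicatorSums.

Section SOP.
Variables (R : realType) (k : nat).
Hypothesis k_gt0 : (0 < k)%N.

Local Notation config m := {ffun 'I_m -> option 'I_k}.
Local Notation ptx m := (1 / (maxn m k)%:R : R).

Lemma ptx_gt0 m : 0 < ptx m.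
Proof. by rewrite divr_gt0 // ltr0n; lia. Qed.

Lemma ptx_le1 m : ptx m <= 1.
Proof. by rewrite ler_pdivrMr ?mul1r ?ler1n ?ltr0n; lia. Qed.

Lemma act_prob_ge0 m a : 0 <= @act_prob R k m a.
Proof.
case: a => [j|] /=; first exact: ltW (ptx_gt0 m).
rewrite subr_ge0 ler_pdivrMr ?mul1r ?ler_nat ?ltr0n; lia.
Qed.

Lemma act_prob_sum1 m : \sum_a @act_prob R k m a = 1.
Proof. by rewrite big_option /= sumr_const card_ord; ring. Qed.

Lemma config_prob_ge0 m (f : config m) : 0 <= config_prob R f.
Proof. by apply: prodr_ge0 => i _; apply: act_prob_ge0. Qed.

Lemma config_prob_sum1 m : \sum_(f : config m) config_prob R f = 1.
Proof.
rewrite /config_prob -(bigA_distr_bigA (fun i a => @act_prob R k m a)) /=.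
by apply: big1 => i _; apply: act_prob_sum1.
Qed.

Lemma act_prob_hit m (j : 'I_k) :
  \sum_a @act_prob R k m a * (a == Some j)%:R = ptx m.
Proof.
rewrite (bigD1 (Some j)) //= eqxx mulr1 big1 ?addr0 // => a /negbTE ->.
by rewrite mulr0.
Qed.

Lemma act_prob_miss m (j : 'I_k) :
  \sum_a @act_prob R k m a * (a != Some j)%:R = 1 - ptx m.
Proof.
have miss a : act_prob R m a * (a != Some j)%:R =
    act_prob R m a - act_prob R m a * (a == Some j)%:R.
  by case: (a == Some j); rewrite ?mulr0 ?mulr1 ?subr0 ?subrr.
by rewrite (eq_bigr _ (fun a _ => miss a)) sumrB act_prob_sum1 act_prob_hit.
Qed.

Lemma successes_le m (f : config m) : (successes f <= m)%N.
Proof.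
rewrite /successes -(card_imset _ (@Some_inj _)).
apply: (@leq_trans #|f @: 'I_m|); last first.
  by rewrite (leq_trans (leq_imset_card _ _)) ?card_ord.
apply: subset_leq_card.
apply/subsetP => x /imsetP [j]; rewrite inE => /cards1P [i f_j] ->.
have : i \in [set i | f i == Some j] by rewrite f_j set11.
by rewrite inE => /eqP <-; apply: imset_f.
Qed.

Lemma successesE m (f : config m) :
  (successes f)%:R = \sum_(j : 'I_k) \sum_(i0 : 'I_m)
     \prod_i ((f i == Some j) == (i == i0))%:R :> R.
Proof.
rewrite natr_card_set; apply: eq_bigr => j _.
rewrite natr_card_eq1; apply: eq_bigr => i0 _; rewrite prodr_natb.
congr (_%:R); congr (nat_of_bool _).
apply/eqP/forallP => [/setP f_j i | f_j].
  by move: (f_j i); rewrite !inE => ->.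
by apply/setP => i; rewrite !inE (eqP (f_j i)).
Qed.

Lemma unique_transmitter_prob m (j : 'I_k) (i0 : 'I_m) :
  \sum_(f : config m)
     config_prob R f * \prod_i ((f i == Some j) == (i == i0))%:R
  = ptx m * (1 - ptx m) ^+ m.-1.
Proof.
pose F i a := @act_prob R k m a * ((a == Some j) == (i == i0))%:R.
transitivity (\prod_i \sum_a F i a).
  rewrite (bigA_distr_bigA F); apply: eq_bigr => f _.
  by rewrite /config_prob -big_split.
rewrite (bigD1 i0) //= {1}/F; under eq_bigr do rewrite eqxx eqb_id.
rewrite act_prob_hit; congr (_ * _).
rewrite (eq_bigr (fun=> 1 - ptx m)) => [|i /negbTE i_i0].
  by rewrite prodr_const cardC1 card_ord.
by rewrite /F; under eq_bigr do rewrite i_i0 eqbF_neg; apply: act_prob_miss.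
Qed.

Lemma expected_successes m :
  \sum_(f : config m) config_prob R f * (successes f)%:R
  = (k * m)%:R * (ptx m * (1 - ptx m) ^+ m.-1).
Proof.
under eq_bigr do rewrite successesE mulr_sumr; rewrite exchange_big /=.
under eq_bigr do under eq_bigr do rewrite mulr_sumr.
under eq_bigr do rewrite exchange_big /=.
under eq_bigr do under eq_bigr do rewrite unique_transmitter_prob.
by rewrite !sumr_const !card_ord -mulrnA [RHS]mulr_natl mulnC.
Qed.

Lemma expected_successes_ge m : (0 < m)%N ->
  (minn m k)%:R / 4 <=
  \sum_(f : config m) config_prob R f * (successes f)%:R.
Proof.
move=> m_gt0; rewrite expected_successes mulrA.
have -> : (k * m)%:R * ptx m = (minn m k)%:R.
  have M_neq0 : (maxn m k)%:R != 0 :> R by rewrite pnatr_eq0; lia.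
  have -> : (k * m = minn m k * maxn m k)%N by lia.
  by rewrite natrM mul1r mulfK.
rewrite -[X in X / 4]mulr1 -mulrA; apply: ler_wpM2l => //.
apply: le_trans (@exp_one_sub_inv_ge_quarter R (maxn m k) _) _; first lia.
apply: ler_wiXn2l; last lia.
  by rewrite subr_ge0 ptx_le1.
by rewrite gerBl ltW ?ptx_gt0.
Qed.

Definition potential (m : nat) : R := 4 * (m%:R / k%:R + (minn m k)%:R).

Lemma potential_ge0 m : 0 <= potential m.
Proof. by rewrite mulr_ge0 ?addr_ge0 ?divr_ge0. Qed.

Lemma potential0 : potential 0 = 0.
Proof. by rewrite /potential min0n mul0r addr0 mulr0. Qed.

Lemma potential_sub_le m s : (0 < m)%N -> (s <= m)%N ->
  potential (m - s) <= potential m - 4 * s%:R / (minn m k)%:R.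
Proof.
move=> m_gt0 s_le_m; have k_pos : 0 < k%:R :> R by rewrite ltr0n.
have s_div_k_ge0 : 0 <= s%:R / k%:R :> R by rewrite divr_ge0.
rewrite /potential natrB // mulrBl; case: (leqP m k) => [m_le_k | k_lt_m].
  have -> : minn (m - s) k = (m - s)%N by lia.
  rewrite natrB //.
  have : s%:R / m%:R <= s%:R :> R.
    by rewrite ler_pdivrMr ?ltr0n // ler_peMr // ler1n.
  lra.
have : (minn (m - s) k)%:R <= k%:R :> R by rewrite ler_nat geq_minr.
lra.
Qed.

Lemma potential_drift m : (0 < m)%N ->
  \sum_(f : config m) config_prob R f * potential (m - successes f)
  <= potential m - 1.
Proof.
move=> m_gt0; pose c : R := 4 / (minn m k)%:R.
pose E := \sum_(f : config m) config_prob R f * (successes f)%:R.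
have min_pos : 0 < (minn m k)%:R :> R by rewrite ltr0n; lia.
have linearity : potential m - c * E =
    \sum_(f : config m) config_prob R f * (potential m - c * (successes f)%:R).
  rewrite /E mulr_sumr -[in LHS](mul1r (potential m)).
  rewrite -[X in X * potential m](config_prob_sum1 m) mulr_suml -sumrB.
  by apply: eq_bigr => f _; ring.
apply: (@le_trans _ _ (potential m - c * E)).
  rewrite linearity; apply: ler_sum => f _.
  apply: ler_wpM2l; first exact: config_prob_ge0.
  by rewrite /c mulrAC; apply: potential_sub_le => //; apply: successes_le.
have -> : 1 = c * ((minn m k)%:R / 4) by rewrite /c; field; rewrite gt_eqF.
rewrite lerD2l lerN2 ler_pM2l ?divr_gt0 //; exact: expected_successes_ge.
Qed.

Lemma trans_expect m n (g : nat -> R) : (m <= n)%N ->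
  \sum_(0 <= m' < n.+1) trans R k m m' * g m'
  = \sum_(f : config m) config_prob R f * g (m - successes f)%N.
Proof.
move=> m_le_n; rewrite /trans.
under eq_bigr => m' _ do rewrite big_distrl /= big_mkcond /=.
rewrite exchange_big /=; apply: eq_bigr => f _.
rewrite -big_mkcond /= (eq_bigl (fun m' => m' == (m - successes f)%N)) => [|m'].
  by rewrite big_nat1_eq ifT //; have := successes_le f; lia.
by rewrite eq_sym.
Qed.

Lemma alive_ge0 n t m : 0 <= alive R k n t m.
Proof.
elim: t m => [|t IHt] m /=; first by rewrite ler0n.
case: eqP => // _; apply: sumr_ge0 => m' _; apply: mulr_ge0 => //.
by apply: sumr_ge0 => f _; apply: config_prob_ge0.
Qed.

Definition alive_potential (n t : nat) : R :=
  \sum_(1 <= m < n.+1) alive R k n t m * potential m.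

Lemma alive_potential_ge0 n t : 0 <= alive_potential n t.
Proof. by apply: sumr_ge0 => m _; rewrite mulr_ge0 ?alive_ge0 ?potential_ge0. Qed.

Lemma alive_potential0 n : (0 < n)%N -> alive_potential n 0 = potential n.
Proof.
move=> n_gt0; rewrite /alive_potential big_nat_recr //= eqxx mul1r.
rewrite big1_seq ?add0r // => m /andP [_]; rewrite mem_index_iota => /andP [_ m_lt_n].
by rewrite (ltn_eqF m_lt_n) mul0r.
Qed.

Lemma alive_potential_step n t :
  alive_potential n t.+1 <= alive_potential n t - tail_prob R k n t.
Proof.
have -> : alive_potential n t.+1 = \sum_(1 <= m < n.+1) alive R k n t m *
    \sum_(f : config m) config_prob R f * potential (m - successes f).
  transitivity (\sum_(1 <= m' < n.+1) \sum_(1 <= m < n.+1)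
      alive R k n t m * (trans R k m m' * potential m')).
    apply: eq_big_nat => m' /andP [m'_gt0 _] /=; rewrite (negbTE (lt0n_neq0 m'_gt0)).
    by rewrite mulr_suml; apply: eq_bigr => m _; rewrite mulrA.
  rewrite exchange_big /=; apply: eq_big_nat => m /andP [_ /ltnSE m_le_n].
  rewrite -mulr_sumr -(trans_expect potential m_le_n).
  by rewrite [in RHS](@big_ltn _ _ _ 0) // potential0 mulr0 add0r.
rewrite /alive_potential /tail_prob -sumrB; apply: ler_sum_nat => m /andP [m_gt0 _].
by rewrite -[X in _ - X]mulr1 -mulrBr ler_wpM2l ?alive_ge0 ?potential_drift.
Qed.

Lemma expected_time_partial_le n N : (0 < n)%N ->
  expected_time_partial R k n N <= potential n.
Proof.
move=> n_gt0; rewrite -alive_potential0 //.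
apply: sum_le_of_potential => t; first exact: alive_potential_ge0.
exact: alive_potential_step.
Qed.

Lemma potential_le n : (k * k + 2 * k <= n)%N ->
  potential n <= 8 * ((n - k)%:R / k%:R).
Proof.
move=> n_large; have k_pos : 0 < k%:R :> R by rewrite ltr0n.
have gap : 0 <= n%:R - (k%:R * k%:R + 2 * k%:R) :> R.
  by rewrite subr_ge0 -natrM -(natrM _ 2) -natrD ler_nat.
rewrite /potential (_ : minn n k = k); last by lia.
rewrite natrB; last by lia.
rewrite -subr_ge0 (_ : _ - _ = 4 * ((n%:R - (k%:R * k%:R + 2 * k%:R)) / k%:R)).
  by rewrite mulr_ge0 // divr_ge0 // ltW.
by field; rewrite gt_eqF.
Qed.

End SOP.

Theorem lemma9 (R : realType) :
  exists C : R, 0 < C /\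
  forall k : nat, (1 <= k)%N ->
  exists N0 : nat, forall n : nat, (N0 <= n)%N -> (k < n)%N ->
  forall N : nat,
    expected_time_partial R k n N <= C * ((n - k)%:R / k%:R).
Proof.
exists 8; split => // k k_gt0; exists (k * k + 2 * k)%N => n n_large _ N.
apply: le_trans _ (potential_le R k_gt0 n_large).
by apply: expected_time_partial_le; lia.
Qed.
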